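(* Let $K$ be a field, $\nu$ a valuation on $K[x]$, and $\mathbf{Q}\subseteq K[x]$ a set of key polynomials for $\nu$. Then $\mathbf{Q}$ is a complete set for $\nu$ if and only if $\mathbf{Q}$ satisfies (GS1$^*$).
   Context: $\nu:K[x]\to\Gamma\cup\{\infty\}$ is a valuation ($\Gamma$ an ordered abelian group) with $\nu(f)=\infty$ only for $f=0$; $\Gamma'=\Gamma\otimes\mathbb{Q}$. For $k\in\mathbb{N}$, $\partial_k f=\frac{1}{k!}\frac{d^kf}{dx^k}$ (Hasse derivative). For nonconstant $f$, $\epsilon(f)=\max\{(\nu(f)-\nu(\partial_kf))/k\mid 1\le k\le\deg f\}\in\Gamma'$ (terms with $\partial_kf=0$ omitted). A key polynomial is a monic nonconstant $Q\in K[x]$ such that every nonconstant $f\in K[x]$ with $\epsilon(f)\ge\epsilon(Q)$ satisfies $\deg f\ge\deg Q$. For monic nonconstant $Q$, the $Q$-expansion of $f$ is the unique expression $f=f_0+f_1Q+\dots+f_nQ^n$ with each $f_i=0$ or $\deg f_i<\deg Q$, and $\nu_Q(f)=\min_i\nu(f_iQ^i)$. A set $\mathbf{Q}$ of monic nonconstant polynomials is complete for $\nu$ if for every nonconstant $f\in K[x]$ there is $Q\in\mathbf{Q}$ with $\deg Q\le\deg f$ and $\nu_Q(f)=\nu(f)$. For finitely supported $\lambda:\mathbf{Q}\to\mathbb{N}_0$ let $\mathbf{Q}^\lambda=\prod_{\lambda(Q)\neq0}Q^{\lambda(Q)}$. (GS1$^*$): for every $f\in K[x]$ there exist $r\ge0$,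 $a_1,\dots,a_r\in K$ and finitely supported $\lambda_1,\dots,\lambda_r:\mathbf{Q}\to\mathbb{N}_0$ with $f=\sum_{i=1}^ra_i\mathbf{Q}^{\lambda_i}$, $\nu(a_i\mathbf{Q}^{\lambda_i})\ge\nu(f)$ for all $i$, and $\deg Q\le\deg f$ whenever $\lambda_i(Q)\ne0$ for some $i$. *)

From mathcomp Require Import all_boot all_order all_algebra.
Set Implicit Arguments. Unset Strict Implicit. Unset Printing Implicit Defensive.
Import GRing.Theory.
Local Open Scope ring_scope.

(* Gamma : an abelian group (zmodType) with an order relation [le] making it an
   ordered abelian group.  Gamma u {oo} is modelled by [option Gamma], None = oo. *)
Section Defs.
Variable G : zmodType.
Variable le : rel G.

Definition ordered_abelian_group : Prop :=
  [/\ reflexive le, antisymmetric le, transitive le, total le &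
      forall a b c : G, le a b -> le (a + c) (b + c)].

Definition ole (x y : option G) : bool :=
  match x, y with
  | _, None => true
  | None, Some _ => false
  | Some a, Some b => le a b
  end.

Definition oadd (x y : option G) : option G :=
  match x, y with
  | Some a, Some b => Some (a + b)
  | _, _ => None
  end.

Definition omin (x y : option G) : option G := if ole x y then x else y.

Variable K : fieldType.

Definition valuation (nu : {poly K} -> option G) : Prop :=
  [/\ forall f, nu f = None <-> f = 0,
      forall f g, nu (f * g) = oadd (nu f) (nu g) &
      forall f g, ole (omin (nu f) (nu g)) (nu (f + g))].

(* Gamma' = Gamma (x) Q : the element a (x) (1/k), k > 0, is represented by
   the pair (a, k); (a,k) <= (b,j) iff j*a <= k*b in Gamma. *)
Definition qle (x y : G * nat) : bool := le (x.1 *+ y.2) (y.1 *+ x.2).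
Definition qmax (x y : G * nat) : G * nat := if qle x y then y else x.

Variable nu : {poly K} -> option G.

Definition gval (f : {poly K}) : G := odflt 0 (nu f).

Definition deg (f : {poly K}) : nat := (size f).-1.

(* the list of (nu f - nu (d_k f)) / k, 1 <= k <= deg f, d_k f <> 0,
   where d_k = p^`N(k) is the Hasse derivative *)
Definition eps_terms (f : {poly K}) : seq (G * nat) :=
  [seq (gval f - gval (f^`N(k)), k) | k <- iota 1 (deg f) & f^`N(k) != 0].

Definition eps (f : {poly K}) : G * nat :=
  match eps_terms f with
  | [::] => (0, 1%N)
  | t :: ts => foldr qmax t ts
  end.

Definition nonconstant (f : {poly K}) : bool := (1 < size f)%N.

Definition key_polynomial (Q : {poly K}) : Prop :=
  [/\ Q \is monic, nonconstant Q &
      forall f, nonconstant f -> qle (eps Q) (eps f) -> (deg Q <= deg f)%N].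

(* i-th coefficient f_i of the Q-expansion f = sum_i f_i Q^i, deg f_i < deg Q *)
Definition qexp_coef (Q f : {poly K}) (i : nat) : {poly K} := (f %/ Q ^+ i) %% Q.

(* nu_Q(f) = min_i nu(f_i Q^i) (f_i = 0 for i >= size f) *)
Definition nuQ (Q f : {poly K}) : option G :=
  \big[omin/None]_(i < size f) nu (qexp_coef Q f i * Q ^+ i).

Definition complete_set (QS : {poly K} -> Prop) : Prop :=
  forall f, nonconstant f ->
    exists Q, [/\ QS Q, (deg Q <= deg f)%N & nuQ Q f = nu f].

(* GS1-star : a finitely supported lambda : QS -> N_0 is encoded by a finite
   multiset (seq) of elements of QS, Q^lambda being the product of its members. *)
Definition GS1star (QS : {poly K} -> Prop) : Prop :=
  forall f : {poly K},
    exists ts : seq (K * seq {poly K}),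
      [/\ f = \sum_(t <- ts) t.1%:P * \prod_(q <- t.2) q,
          forall t, t \in ts -> ole (nu f) (nu (t.1%:P * \prod_(q <- t.2) q)) &
          forall t q, t \in ts -> q \in t.2 -> QS q /\ (deg q <= deg f)%N].

End Defs.

From mathcomp Require Import all_boot all_order all_algebra.
From mathcomp Require Import ring zify.
Set Implicit Arguments. Unset Strict Implicit. Unset Printing Implicit Defensive.
Import GRing.Theory.
Local Open Scope ring_scope.

(* complete => (GS1* ), by induction on the degree: for nonconstant f pick Q in QS
   with deg Q <= deg f and nu_Q(f) = nu(f).  The coefficients f_i of the Q-expansion
   of f have degree < deg Q, so by induction they are combinations of products of
   members of QS with terms of value >= nu(f_i); multiplying by Q^i yields terms of
   value >= nu(f_i Q^i) >= nu_Q(f) = nu(f).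

   (GS1* ) => complete: write f = sum_i a_i QS^lambda_i with terms of value >= nu(f)
   and let Q be a polynomial occurring there with maximal epsilon; it suffices to show
   nu_Q(f) >= nu(f).  Call g "expanded above m" when it has a Q-expansion whose terms
   all have value >= m; by uniqueness of Q-expansions then nu_Q(g) >= m.  This property
   is stable under sums and products, it holds for constants, and for every key
   polynomial q with epsilon(q) <= epsilon(Q).  Stability under products rests on the
   fact that for u, v of degree < deg Q, writing uv = qQ + r, both nu(r) and nu(qQ) are
   >= nu(uv); it is proved by comparing the Hasse derivatives d_k of all polynomials
   involved with epsilon(Q), using the Leibniz rule for Hasse derivatives. *)

Section OrderedGroup.
Variables (G : zmodType) (le : rel G).
Hypothesis le_oag : ordered_abelian_group le.

Definition lt (a b : G) := ~~ le b a.

Lemma leR a : le a a. Proof. by case: le_oag. Qed.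

Lemma leT a b c : le a b -> le b c -> le a c.
Proof. by case: le_oag => _ _ T _ _; apply: T. Qed.

Lemma leA a b : le a b -> le b a -> a = b.
Proof. by case: le_oag => _ A _ _ _ h1 h2; apply: A; rewrite h1 h2. Qed.

Lemma leTot a b : le a b || le b a.
Proof. by case: le_oag => _ _ _ T _; apply: T. Qed.

Lemma leD2r a b c : le (a + c) (b + c) = le a b.
Proof.
case: le_oag => _ _ _ _ leDr; apply/idP/idP => [h|]; last exact: leDr.
by have := leDr _ _ (- c) h; rewrite !addrK.
Qed.

Lemma leD2l a b c : le (c + a) (c + b) = le a b.
Proof. by rewrite ![c + _]addrC leD2r. Qed.

Lemma leD a b c e : le a b -> le c e -> le (a + c) (b + e).
Proof. by move=> h1 h2; apply: (leT (_ : le _ (b + c))); rewrite ?leD2r ?leD2l. Qed.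

Lemma ltW a b : lt a b -> le a b.
Proof. by rewrite /lt; case/orP: (leTot a b) => ->. Qed.

Lemma ltD a b c e : lt a b -> le c e -> lt (a + c) (b + e).
Proof.
move=> h1 h2; apply/negP => h3.
have : le (b + c) (a + c) by apply: leT h3; rewrite leD2l.
by rewrite leD2r; apply/negP.
Qed.

Lemma ltD2r a b c : lt (a + c) (b + c) = lt a b.
Proof. by rewrite /lt leD2r. Qed.

Lemma leMn a b n : le a b -> le (a *+ n) (b *+ n).
Proof. by move=> h; elim: n => [|n IH]; rewrite ?mulr0n ?leR // !mulrS leD. Qed.

Lemma ltMn a b n : (0 < n)%N -> lt a b -> lt (a *+ n) (b *+ n).
Proof. by case: n => // n _ h; rewrite !mulrS ltD // leMn // ltW. Qed.

Lemma leMn2 a b n : (0 < n)%N -> le (a *+ n) (b *+ n) = le a b.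
Proof.
move=> n_gt0; apply/idP/idP; last exact: leMn.
by move=> h; apply/negPn/negP => /(ltMn n_gt0)/negP.
Qed.

Lemma double_eq0 (a : G) : a + a = 0 -> a = 0.
Proof.
move=> aa0; case/orP: (leTot a 0) => h; apply: leA => //.
- have : le (a + a) (a + 0) by rewrite leD2l.
  by rewrite aa0 addr0.
- have : le (a + 0) (a + a) by rewrite leD2l.
  by rewrite aa0 addr0.
Qed.

Implicit Types x y z : option G.

Definition olt x y := ~~ ole le y x.

Lemma oleR x : ole le x x. Proof. by case: x => //= a; apply: leR. Qed.

Lemma oleT x y z : ole le x y -> ole le y z -> ole le x z.
Proof. by case: x; case: y; case: z => //= a b c; apply: leT. Qed.

Lemma oleA x y : ole le x y -> ole le y x -> x = y.
Proof. by case: x; case: y => //= a b h1 h2; rewrite (leA h2 h1). Qed.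

Lemma oleTot x y : ole le x y || ole le y x.
Proof. by case: x; case: y => //= a b; apply: leTot. Qed.

Lemma oltW x y : olt x y -> ole le x y.
Proof. by rewrite /olt; case/orP: (oleTot x y) => ->. Qed.

Lemma olt_le_trans x y z : olt x y -> ole le y z -> olt x z.
Proof. by move=> h1 h2; apply: contra h1 => h3; apply: oleT h2 h3. Qed.

Lemma ole_None x : ole le x None. Proof. by case: x. Qed.

Lemma oadd_le x y z t : ole le x y -> ole le z t -> ole le (oadd x z) (oadd y t).
Proof. by case: x; case: y; case: z; case: t => //= *; apply: leD. Qed.

Lemma oadd_lt (a c : G) y t :
  olt (Some a) y -> ole le (Some c) t -> olt (Some (a + c)) (oadd y t).
Proof. by case: y; case: t => //= b e h1 h2; apply: ltD. Qed.

(* Scaling by a positive integer, used to clear the denominator of epsilon. *)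
Definition oscale (n : nat) x := omap (fun a => a *+ n) x.

Lemma oscale_le n x y : ole le x y -> ole le (oscale n x) (oscale n y).
Proof. by case: x; case: y => //= a b; apply: leMn. Qed.

Lemma oscale_le2 n x y : (0 < n)%N -> ole le (oscale n x) (oscale n y) = ole le x y.
Proof. by move=> n_gt0; case: x; case: y => //= a b; rewrite leMn2. Qed.

Lemma oscale_lt2 n x y : (0 < n)%N -> olt (oscale n x) (oscale n y) = olt x y.
Proof. by move=> n_gt0; rewrite /olt oscale_le2. Qed.

Lemma oscale_add n x y : oscale n (oadd x y) = oadd (oscale n x) (oscale n y).
Proof. by case: x; case: y => //= a b; rewrite mulrnDl. Qed.

Definition up_closed (P : option G -> Prop) := forall x y, ole le x y -> P x -> P y.

Lemma up_closed_ole z : up_closed (ole le z).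
Proof. by move=> x y h1 h2; apply: oleT h2 h1. Qed.

Lemma up_closed_olt z : up_closed (olt z).
Proof. by move=> x y h1 h2; apply: olt_le_trans h2 h1. Qed.

Lemma omin_P (P : option G -> Prop) x y : P x -> P y -> P (omin le x y).
Proof. by rewrite /omin; case: ifP. Qed.

Lemma omin_le x y : ole le (omin le x y) x /\ ole le (omin le x y) y.
Proof.
rewrite /omin; case: ifP => h; split => //; try apply: oleR.
by case/orP: (oleTot x y) => h2; [rewrite h2 in h|].
Qed.

Lemma big_omin_le (n : nat) (F : 'I_n -> option G) (j : 'I_n) :
  ole le (\big[omin le/None]_(i < n) F i) (F j).
Proof.
elim: n F j => [|n IH] F j; first by case: j.
rewrite big_ord_recl; case: (unliftP ord0 j) => [j'|] ->.
- exact: oleT (omin_le _ _).2 (IH (fun i => F (lift ord0 i)) j').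
- exact: (omin_le _ _).1.
Qed.
End OrderedGroup.

Section Valuation.
Variables (G : zmodType) (le : rel G).
Hypothesis le_oag : ordered_abelian_group le.
Variables (K : fieldType) (nu : {poly K} -> option G).
Hypothesis nu_val : valuation le nu.
Implicit Types f g : {poly K}.

Lemma nu0 : nu 0 = None. Proof. by case: nu_val => h _ _; apply/h. Qed.

Lemma nuNZ f : f != 0 -> nu f = Some (gval nu f).
Proof.
case: nu_val => nu_oo _ _; rewrite /gval; case E: (nu f) => [a|] //=.
by move/nu_oo: E => ->; rewrite eqxx.
Qed.

Lemma nuM f g : nu (f * g) = oadd (nu f) (nu g). Proof. by case: nu_val. Qed.

Lemma nuD_up (P : option G -> Prop) f g :
  up_closed le P -> P (nu f) -> P (nu g) -> P (nu (f + g)).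
Proof. by case: nu_val => _ _ nuD uP h1 h2; apply: uP (nuD f g) _; apply: omin_P. Qed.

Lemma nu1 : nu 1 = Some 0.
Proof.
have := nuM 1 1; rewrite mulr1 (nuNZ (oner_neq0 _)) /= => -[h].
by rewrite -{1}[gval nu 1]addr0 in h; move/addrI: h => <-.
Qed.

Lemma nuN f : nu (- f) = nu f.
Proof.
have nuN1 : nu (-1) = Some 0.
  have := nuM (-1) (-1); rewrite mulrNN mulr1 nu1.
  rewrite (nuNZ (_ : -1 != 0)) ?oppr_eq0 ?oner_neq0 //= => -[h].
  by rewrite (double_eq0 le_oag (esym h)).
by rewrite -mulN1r nuM nuN1; case: (nu f) => //= a; rewrite add0r.
Qed.

Lemma nuB_up (P : option G -> Prop) f g :
  up_closed le P -> P (nu f) -> P (nu g) -> P (nu (f - g)).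
Proof. by move=> uP h1 h2; apply: nuD_up => //; rewrite nuN. Qed.

Lemma nu_sum_up (P : option G -> Prop) (I : Type) (s : seq I) (Pr : pred I)
    (F : I -> {poly K}) :
  up_closed le P -> P None -> (forall i, Pr i -> P (nu (F i))) ->
  P (nu (\sum_(i <- s | Pr i) F i)).
Proof.
move=> uP P0 h; apply: (big_ind (fun p => P (nu p))) => //; first by rewrite nu0.
by move=> x y; apply: nuD_up.
Qed.

Lemma nu_strict f g : olt le (nu f) (nu g) -> nu (f + g) = nu f.
Proof.
move=> h; apply: (oleA le_oag).
- apply: contraT => h2.
  have : olt le (nu f) (nu ((f + g) - g)).
    by apply: (nuB_up (P := olt le (nu f))); first exact: up_closed_olt.
  by rewrite addrK /olt oleR.
- apply: (nuD_up (P := ole le (nu f))); [exact: up_closed_ole | exact: oleR | exact: oltW].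
Qed.
End Valuation.

Section RationalValues.
Variables (G : zmodType) (le : rel G).
Hypothesis le_oag : ordered_abelian_group le.
Implicit Types x y z : G * nat.

Lemma qleR x : qle le x x. Proof. exact: leR. Qed.

Lemma qleTot x y : qle le x y || qle le y x. Proof. exact: leTot. Qed.

Lemma qleT x y z : (0 < y.2)%N -> qle le x y -> qle le y z -> qle le x z.
Proof.
case: x => a k; case: y => b j; case: z => c m /= j_gt0; rewrite /qle /= => h1 h2.
rewrite -(leMn2 le_oag _ _ j_gt0) mulrnAC [c *+ k *+ j]mulrnAC.
apply: (leT le_oag (leMn le_oag m h1)); rewrite [b *+ k *+ m]mulrnAC.
exact: leMn.
Qed.

Lemma qmax_l x y : qle le x (qmax le x y).
Proof. by rewrite /qmax; case: ifP => // _; apply: qleR. Qed.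

Lemma qmax_r x y : qle le y (qmax le x y).
Proof.
rewrite /qmax; case: ifP => h; first exact: qleR.
by case/orP: (qleTot x y) => h2; [rewrite h2 in h|].
Qed.

Lemma foldr_qmax_mem t0 ts : foldr (qmax le) t0 ts \in t0 :: ts.
Proof.
elim: ts => [|t ts IH] /=; first by rewrite mem_head.
rewrite /qmax; case: ifP => _; last by rewrite !inE eqxx orbT.
by move: IH; rewrite !inE => /orP[] ->; rewrite ?orbT.
Qed.

Lemma foldr_qmax_ge t0 ts : (forall t, t \in t0 :: ts -> (0 < t.2)%N) ->
  forall t, t \in t0 :: ts -> qle le t (foldr (qmax le) t0 ts).
Proof.
elim: ts => [|s ts IH] /= pos t; first by rewrite inE => /eqP ->; apply: qleR.
have pos' t' : t' \in t0 :: ts -> (0 < t'.2)%N.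
  by move=> ht'; apply: pos; move: ht'; rewrite !inE => /orP[] ->; rewrite ?orbT.
rewrite [t \in _]inE in_cons orbCA -in_cons => /orP[/eqP ->|ht]; first exact: qmax_l.
apply: (qleT (pos' _ (foldr_qmax_mem t0 ts))); [exact: IH | exact: qmax_r].
Qed.
End RationalValues.

Section PolynomialFacts.
Variable K : fieldType.
Implicit Types f g : {poly K}.

Lemma size_deg f : f != 0 -> size f = (deg f).+1.
Proof. by move=> f_neq0; rewrite /deg prednK // size_poly_gt0. Qed.

Lemma nonconstant_neq0 f : nonconstant f -> f != 0.
Proof. by apply: contraTneq => ->; rewrite /nonconstant size_poly0. Qed.

Lemma nderivn_big f k : (deg f < k)%N -> f^`N(k) = 0.
Proof.
move=> h; apply: nderivn_poly0; have [->|f_neq0] := eqVneq f 0.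
  by rewrite size_poly0.
by rewrite size_deg.
Qed.

Lemma nderivn_neq0_le f k : f^`N(k) != 0 -> (k <= deg f)%N.
Proof. by rewrite leqNgt; apply: contra => /nderivn_big ->. Qed.

(* the top Hasse derivative is the leading coefficient *)
Lemma nderivn_deg_neq0 f : f != 0 -> f^`N(deg f) != 0.
Proof.
move=> f_neq0; apply/eqP => top0; have := congr1 (fun p : {poly K} => p`_0) top0.
rewrite coef_nderivn addn0 binn mulr1n coef0 => lc0.
by move: f_neq0; rewrite -lead_coef_eq0 lead_coefE -/(deg f) lc0 eqxx.
Qed.

Lemma size_monicB f g : f \is monic -> g \is monic -> size f = size g ->
  (size (f - g)%R < size f)%N.
Proof.
move=> /monicP lf /monicP lg eq_size.
have f_neq0 : f != 0 by rewrite -lead_coef_eq0 lf oner_neq0.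
have size_le : (size (f - g)%R <= size f)%N.
  by apply: leq_trans (size_polyD _ _) _; rewrite size_polyN eq_size maxnn.
rewrite ltn_neqAle size_le andbT; apply: contraNneq f_neq0 => eq_size'.
suff /eqP fg0 : f - g == 0 by rewrite -size_poly_eq0 -eq_size' fg0 size_poly0.
rewrite -lead_coef_eq0 lead_coefE eq_size' coefB.
by rewrite [in X in _ - g`_X]eq_size -!lead_coefE lf lg subrr.
Qed.
End PolynomialFacts.

Lemma nderivnM (R : comNzRingType) (p q : {poly R}) k :
  (p * q)^`N(k) = \sum_(i < k.+1) p^`N(i) * q^`N(k - i).
Proof.
elim/poly_ind: p k => [|p c IH] k.
  by rewrite mul0r big1 => [|i _]; rewrite nderivn_poly0 ?size_poly0 ?mul0r.
case: k => [|k]; first by rewrite big_ord1 !nderivn0.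
have -> : (p * 'X + c%:P) * q = (p * q) * 'X + c *: q.
  by rewrite mulrDl -mul_polyC; congr (_ + _); rewrite -!mulrA [q * _]mulrC.
have nderivnMX r n : (r * 'X)^`N(n.+1) = r^`N(n) + r^`N(n.+1) * 'X.
  by have := nderivnMXaddC n r 0; rewrite addr0.
pose tail r := \sum_(i < k.+1) r^`N(i.+1) * q^`N(k - i).
have split_sum r : \sum_(i < k.+2) r^`N(i) * q^`N(k.+1 - i) = r * q^`N(k.+1) + tail r.
  by rewrite /tail big_ord_recl nderivn0 subn0.
have tail_pXc : tail (p * 'X + c%:P) = \sum_(i < k.+1) p^`N(i) * q^`N(k - i) + tail p * 'X.
  rewrite /tail mulr_suml -big_split /=; apply: eq_bigr => i _.
  by rewrite nderivnMXaddC mulrDl mulrAC.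
rewrite nderivnD nderivnZ nderivnMX !IH !split_sum tail_pXc -mul_polyC.
ring.
Qed.

Section QExpansion.
Variables (K : fieldType) (Q : {poly K}).
Hypothesis Q_nc : nonconstant Q.
Implicit Types g : {poly K}.

Let Q_neq0 : Q != 0 := nonconstant_neq0 Q_nc.

Lemma qexp_size g i : (size (qexp_coef Q g i) < size Q)%N.
Proof. by rewrite ltn_modp. Qed.

Lemma qexp_coefS g n : qexp_coef Q g n.+1 = qexp_coef Q (g %/ Q) n.
Proof. by rewrite /qexp_coef exprS divp_divl. Qed.

Lemma sum_powQ_recl (N : nat) (c : nat -> {poly K}) : (forall n, (N <= n)%N -> c n = 0) ->
  \sum_(m < N) c m * Q ^+ m = (\sum_(m < N.-1) c m.+1 * Q ^+ m) * Q + c 0%N.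
Proof.
case: N => [|N] hc; first by rewrite !big_ord0 mul0r add0r hc.
rewrite big_ord_recl /= expr0 mulr1 addrC mulr_suml; congr (_ + _).
by apply: eq_bigr => i _; rewrite /bump /= add1n exprSr mulrA.
Qed.

Lemma qexp_unique n (N : nat) (c : nat -> {poly K}) g :
  (forall m, (size (c m) < size Q)%N) -> (forall m, (N <= m)%N -> c m = 0) ->
  g = \sum_(m < N) c m * Q ^+ m -> qexp_coef Q g n = c n.
Proof.
elim: n N c g => [|n IH] N c g small vanish ->.
  by rewrite /qexp_coef expr0 divp1 sum_powQ_recl // modp_addl_mul_small.
rewrite qexp_coefS sum_powQ_recl // divp_addl_mul_small //.
apply: (IH N.-1 (fun m => c m.+1)) => // m hm.
by apply: vanish; case: N hm {small} => //= N.
Qed.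

Lemma qexp_sum (N : nat) g : (size g <= N)%N -> g = \sum_(i < N) qexp_coef Q g i * Q ^+ i.
Proof.
elim: N g => [|N IH] g size_g.
  by rewrite big_ord0; apply/eqP; rewrite -size_poly_eq0 -leqn0.
have size_div : (size (g %/ Q)%R <= N)%N.
  rewrite size_divp //; move: size_g Q_nc; rewrite /nonconstant.
  by move: (size g) (size Q) => a b; lia.
rewrite big_ord_recl /= {1}(divp_eq g Q) (IH _ size_div) addrC.
rewrite /qexp_coef expr0 divp1 mulr1 mulr_suml; congr (_ + _).
apply: eq_bigr => i _; rewrite /bump /= add1n -/(qexp_coef Q g i.+1) qexp_coefS.
by rewrite exprSr mulrA.
Qed.
End QExpansion.

Section Epsilon.
Variables (G : zmodType) (le : rel G).
Hypothesis le_oag : ordered_abelian_group le.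
Variables (K : fieldType) (nu : {poly K} -> option G).
Implicit Types f : {poly K}.

Lemma eps_termsP f t : t \in eps_terms nu f -> exists k,
  [/\ (0 < k)%N, (k <= deg f)%N, f^`N(k) != 0 & t = (gval nu f - gval nu f^`N(k), k)].
Proof.
case/mapP => k; rewrite mem_filter mem_iota => /and3P[nz k_gt0 k_le] ->.
by exists k; split => //; rewrite add1n ltnS in k_le.
Qed.

Lemma eps_termsI f k : (0 < k)%N -> (k <= deg f)%N -> f^`N(k) != 0 ->
  (gval nu f - gval nu f^`N(k), k) \in eps_terms nu f.
Proof.
move=> k_gt0 k_le nz; apply/mapP; exists k => //.
by rewrite mem_filter mem_iota nz k_gt0 add1n ltnS k_le.
Qed.

Lemma eps_terms_pos f t : t \in eps_terms nu f -> (0 < t.2)%N.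
Proof. by case/eps_termsP => k [k_gt0 _ _ ->]. Qed.

Lemma eps_pos f : (0 < (eps le nu f).2)%N.
Proof.
rewrite /eps; case E: (eps_terms nu f) => [|t ts] //.
by apply: (@eps_terms_pos f); rewrite E foldr_qmax_mem.
Qed.

Lemma eps_ge f t : t \in eps_terms nu f -> qle le t (eps le nu f).
Proof.
rewrite /eps; case E: (eps_terms nu f) => [|t0 ts] // t_in.
by apply: foldr_qmax_ge => // u u_in; apply: (@eps_terms_pos f); rewrite E.
Qed.

Lemma eps_in f : nonconstant f -> eps le nu f \in eps_terms nu f.
Proof.
move=> f_nc; have f_neq0 := nonconstant_neq0 f_nc.
have : (gval nu f - gval nu f^`N(deg f), deg f) \in eps_terms nu f.
  apply: eps_termsI => //; last exact: nderivn_deg_neq0.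
  by move: f_nc; rewrite /nonconstant size_deg.
by rewrite /eps; case: (eps_terms nu f) => [|t0 ts] //= _; apply: foldr_qmax_mem.
Qed.
End Epsilon.

Section ExpansionAbove.
Variables (G : zmodType) (le : rel G).
Hypothesis le_oag : ordered_abelian_group le.
Variables (K : fieldType) (nu : {poly K} -> option G).
Hypothesis nu_val : valuation le nu.
Variable Q : {poly K}.
Hypothesis Q_nc : nonconstant Q.
Implicit Types g : {poly K}.

(* discharges the size conditions on zero coefficients *)
Let size_Q_gt0 : (0 < size Q)%N := ltnW Q_nc.

Definition expanded_above (m : option G) g := exists (N : nat) (c : nat -> {poly K}),
  [/\ forall n, (size (c n) < size Q)%N, forall n, (N <= n)%N -> c n = 0,
      g = \sum_(n < N) c n * Q ^+ n & forall n, ole le m (nu (c n * Q ^+ n))].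

Lemma sum_powQ_widen (N1 N : nat) (c : nat -> {poly K}) :
  (N1 <= N)%N -> (forall n, (N1 <= n)%N -> c n = 0) ->
  \sum_(n < N) c n * Q ^+ n = \sum_(n < N1) c n * Q ^+ n.
Proof.
move=> N1_le vanish; rewrite (big_ord_widen N (fun n => c n * Q ^+ n) N1_le).
rewrite [RHS]big_mkcond /=; apply: eq_bigr => i _.
by case: ltnP => // /vanish ->; rewrite mul0r.
Qed.

Lemma expanded_mono m m' g : ole le m' m -> expanded_above m g -> expanded_above m' g.
Proof.
move=> m'_le [N [c [small vanish -> above]]]; exists N, c; split => // n.
exact: (oleT le_oag m'_le (above n)).
Qed.

Lemma expanded0 m : expanded_above m 0.
Proof.
exists 0%N, (fun _ => 0); split => //.
- by move=> n; rewrite size_poly0.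
- by rewrite big_ord0.
- by move=> n; rewrite mul0r (nu0 nu_val) ole_None.
Qed.

Lemma expandedD m g1 g2 :
  expanded_above m g1 -> expanded_above m g2 -> expanded_above m (g1 + g2).
Proof.
move=> [N1 [c1 [small1 vanish1 -> above1]]] [N2 [c2 [small2 vanish2 -> above2]]].
exists (maxn N1 N2), (fun n => c1 n + c2 n); split.
- move=> n; apply: leq_ltn_trans (size_polyD _ _) _; by rewrite gtn_max small1 small2.
- by move=> n; rewrite geq_max => /andP[h1 h2]; rewrite vanish1 // vanish2 // addr0.
- rewrite -(sum_powQ_widen (leq_maxl N1 N2) vanish1).
  rewrite -(sum_powQ_widen (leq_maxr N1 N2) vanish2) -big_split /=.
  by apply: eq_bigr => i _; rewrite mulrDl.
- move=> n; rewrite mulrDl; apply: (nuD_up nu_val (P := ole le m)) => //.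
  exact: up_closed_ole.
Qed.

Lemma expanded_sum m (I : Type) (s : seq I) (P : pred I) (F : I -> {poly K}) :
  (forall i, P i -> expanded_above m (F i)) -> expanded_above m (\sum_(i <- s | P i) F i).
Proof. by move=> h; apply: big_ind; [apply: expanded0 | apply: expandedD | apply: h]. Qed.

Lemma expanded_single m (r : {poly K}) (n : nat) :
  (size r < size Q)%N -> ole le m (nu (r * Q ^+ n)) -> expanded_above m (r * Q ^+ n).
Proof.
move=> small_r above_r; exists n.+1, (fun k => if k == n then r else 0); split.
- by move=> k; case: ifP; rewrite ?size_poly0.
- by move=> k k_ge; case: eqP k_ge => // ->; rewrite ltnn.
- rewrite big_ord_recr /= eqxx big1 ?add0r // => i _.
  by rewrite ifN ?mul0r // neq_ltn ltn_ord.
- by move=> k; case: ifP => [/eqP ->|_] //; rewrite mul0r (nu0 nu_val) ole_None.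
Qed.

Lemma expanded_const (a : K) : expanded_above (nu a%:P) a%:P.
Proof.
rewrite -[a%:P]mulr1 -(expr0 Q); apply: expanded_single; last exact: oleR.
exact: leq_ltn_trans (size_polyC_leq1 a) Q_nc.
Qed.

Lemma nuQ_le g : ole le (nuQ le nu Q g) (nu g).
Proof.
rewrite {2}(@qexp_sum _ _ Q_nc (size g) g (leqnn _)).
apply: (nu_sum_up nu_val (P := ole le (nuQ le nu Q g))) => [||i _].
- exact: up_closed_ole.
- exact: ole_None.
- exact: big_omin_le.
Qed.

(* by uniqueness of Q-expansions, an expansion above m bounds nu_Q from below *)
Lemma nuQ_ge m g : expanded_above m g -> ole le m (nuQ le nu Q g).
Proof.
move=> [N [c [small vanish g_def above]]].
apply: (big_ind (ole le m)) => [|x y|i _].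
- exact: ole_None.
- exact: (@omin_P _ le (ole le m)).
- by rewrite (qexp_unique i small vanish g_def).
Qed.
End ExpansionAbove.

Section KeyPolynomial.
Variables (G : zmodType) (le : rel G).
Hypothesis le_oag : ordered_abelian_group le.
Variables (K : fieldType) (nu : {poly K} -> option G).
Hypothesis nu_val : valuation le nu.
Variable Q : {poly K}.
Hypothesis Q_key : key_polynomial le nu Q.
Implicit Types f g h q u v : {poly K}.

Let Q_nc : nonconstant Q. Proof. by case: Q_key. Defined.
Let Q_neq0 : Q != 0 := nonconstant_neq0 Q_nc.

Let B := (eps le nu Q).1.
Let d := (eps le nu Q).2.
Let d_gt0 : (0 < d)%N := eps_pos le nu Q.
Let epsQ : eps le nu Q = (B, d) := surjective_pairing _.

(* d * (y + k * epsilon(Q)): the value y of a k-th Hasse derivative, raised by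
   k * epsilon(Q) and cleared of the denominator d *)
Definition shifted (k : nat) (y : option G) := oadd (oscale d y) (Some (B *+ k)).

(* nu(h) <= nu(d_k h) + k epsilon(Q) for all k, i.e. epsilon(h) <= epsilon(Q) ... *)
Definition eps_bounded h := forall k, ole le (oscale d (nu h)) (shifted k (nu h^`N(k))).

(* ... and the same with strict inequalities for k >= 1 *)
Definition eps_strict h :=
  forall k, (0 < k)%N -> olt le (oscale d (nu h)) (shifted k (nu h^`N(k))).

Lemma shifted0 y : shifted 0 y = oscale d y.
Proof. by rewrite /shifted mulr0n; case: y => //= a; rewrite addr0. Qed.

Lemma shifted_mul i j f g : f != 0 -> g != 0 ->
  shifted (i + j) (nu (f * g)) = oadd (shifted i (nu f)) (shifted j (nu g)).
Proof.
move=> f_neq0 g_neq0; rewrite /shifted (nuM nu_val) (nuNZ nu_val f_neq0).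
by rewrite (nuNZ nu_val g_neq0) /= mulrnDl mulrnDr addrACA.
Qed.

Lemma shifted_le k x y : ole le x y -> ole le (shifted k x) (shifted k y).
Proof. by move=> x_le; apply: (oadd_le le_oag (oscale_le le_oag _ x_le) (oleR le_oag _)). Qed.

Lemma shifted_lt k x y : olt le (shifted k x) (shifted k y) -> olt le x y.
Proof. by apply: contra; apply: shifted_le. Qed.

Lemma up_closed_shifted_lt z k : up_closed le (fun y => olt le z (shifted k y)).
Proof. by move=> x y x_le z_lt; apply: (olt_le_trans le_oag z_lt (shifted_le _ x_le)). Qed.

Lemma shifted_term_le f k : f != 0 -> f^`N(k) != 0 ->
  qle le (gval nu f - gval nu f^`N(k), k) (B, d) ->
  ole le (oscale d (nu f)) (shifted k (nu f^`N(k))).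
Proof.
move=> f_neq0 fk_neq0; rewrite /qle /shifted (nuNZ nu_val f_neq0) (nuNZ nu_val fk_neq0) /=.
by rewrite -(leD2r le_oag _ _ (gval nu f^`N(k) *+ d)) -mulrnDl subrK addrC.
Qed.

Lemma shifted_term_lt f k : f != 0 -> f^`N(k) != 0 ->
  ~~ qle le (B, d) (gval nu f - gval nu f^`N(k), k) ->
  olt le (oscale d (nu f)) (shifted k (nu f^`N(k))).
Proof.
move=> f_neq0 fk_neq0; rewrite /qle /shifted /olt (nuNZ nu_val f_neq0).
rewrite (nuNZ nu_val fk_neq0) /= => lt_k.
have : lt le ((gval nu f - gval nu f^`N(k)) *+ d) (B *+ k) by [].
by rewrite -(ltD2r le_oag _ _ (gval nu f^`N(k) *+ d)) -mulrnDl subrK addrC.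
Qed.

Lemma strict_bounded h : eps_strict h -> eps_bounded h.
Proof. by move=> h_strict [|k]; [rewrite shifted0 nderivn0 oleR | apply/oltW/h_strict]. Qed.

Lemma bounded_of_eps h : h != 0 -> qle le (eps le nu h) (eps le nu Q) -> eps_bounded h.
Proof.
move=> h_neq0 h_le [|k]; first by rewrite shifted0 nderivn0 oleR.
have [->|hk_neq0] := eqVneq h^`N(k.+1) 0; first by rewrite (nu0 nu_val) ole_None.
apply: shifted_term_le => //; rewrite -epsQ.
apply: (qleT le_oag (eps_pos le nu h)) h_le; apply: (eps_ge le_oag).
by apply: eps_termsI => //; apply: nderivn_neq0_le.
Qed.

Lemma Q_bounded : eps_bounded Q.
Proof. exact: bounded_of_eps (qleR _ _). Qed.

Lemma Q_attained : oscale d (nu Q) = shifted d (nu Q^`N(d)).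
Proof.
have := eps_in le nu Q_nc; rewrite epsQ => /eps_termsP [k [_ _ Qk_neq0 [eB ed]]].
rewrite -ed in Qk_neq0 *; rewrite /shifted (nuNZ nu_val Q_neq0) (nuNZ nu_val Qk_neq0) /= eB.
by rewrite -ed -mulrnDl addrC subrK.
Qed.

Lemma derivQ_neq0 : Q^`N(d) != 0.
Proof.
apply/eqP => Qd0; have := Q_attained.
by rewrite Qd0 (nu0 nu_val) (nuNZ nu_val Q_neq0).
Qed.

(* since Q is a key polynomial, epsilon(h) < epsilon(Q) whenever deg h < deg Q *)
Lemma strict_small h : h != 0 -> (size h < size Q)%N -> eps_strict h.
Proof.
move=> h_neq0 small_h k k_gt0.
have [->|hk_neq0] := eqVneq h^`N(k) 0; first by rewrite (nu0 nu_val) (nuNZ nu_val h_neq0).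
have k_le := nderivn_neq0_le hk_neq0.
apply: shifted_term_lt => //; apply/negP => Q_le.
have h_nc : nonconstant h by rewrite /nonconstant size_deg // ltnS (leq_trans k_gt0).
case: Q_key => _ _ /(_ h h_nc) deg_le.
have : (deg Q <= deg h)%N.
  apply: deg_le; rewrite epsQ; apply: (qleT le_oag _ Q_le) => //.
  exact/(eps_ge le_oag)/eps_termsI.
by rewrite leqNgt /deg -ltnS !prednK ?size_poly_gt0 ?small_h.
Qed.

Lemma leibniz_term_lt f g i j : f != 0 -> g != 0 ->
  olt le (oscale d (nu f)) (shifted i (nu f^`N(i))) ->
  ole le (oscale d (nu g)) (shifted j (nu g^`N(j))) ->
  olt le (oscale d (nu (f * g))) (shifted (i + j) (nu (f^`N(i) * g^`N(j)))).
Proof.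
move=> f_neq0 g_neq0 f_lt g_le; have fg_neq0 : f * g != 0 by rewrite mulf_neq0.
have [->|fi_neq0] := eqVneq f^`N(i) 0.
  by rewrite mul0r (nu0 nu_val) (nuNZ nu_val fg_neq0).
have [->|gj_neq0] := eqVneq g^`N(j) 0.
  by rewrite mulr0 (nu0 nu_val) (nuNZ nu_val fg_neq0).
rewrite shifted_mul // (nuM nu_val) oscale_add.
rewrite (nuNZ nu_val f_neq0) (nuNZ nu_val g_neq0) in f_lt g_le *.
exact: oadd_lt.
Qed.

Lemma leibniz_term_lt_r f g i j : f != 0 -> g != 0 ->
  ole le (oscale d (nu f)) (shifted i (nu f^`N(i))) ->
  olt le (oscale d (nu g)) (shifted j (nu g^`N(j))) ->
  olt le (oscale d (nu (f * g))) (shifted (i + j) (nu (f^`N(i) * g^`N(j)))).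
Proof.
by move=> *; rewrite [f * g]mulrC addnC [f^`N(i) * _]mulrC; apply: leibniz_term_lt.
Qed.

Lemma strict_mul u v : u != 0 -> v != 0 -> eps_strict u -> eps_strict v -> eps_strict (u * v).
Proof.
move=> u_neq0 v_neq0 u_strict v_strict k k_gt0.
have uv_neq0 : u * v != 0 by rewrite mulf_neq0.
rewrite nderivnM.
apply: (nu_sum_up nu_val (P := fun y => olt le (oscale d (nu (u * v))) (shifted k y))).
- exact: up_closed_shifted_lt.
- by rewrite (nuNZ nu_val uv_neq0).
move=> i _; have i_le : (i <= k)%N by rewrite -ltnS.
rewrite -[X in shifted X _](subnKC i_le).
have [i0|i_gt0] := posnP i.
- apply: leibniz_term_lt_r => //; first exact: strict_bounded.
  by apply: v_strict; rewrite i0 subn0.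
- by apply: leibniz_term_lt => //; [apply: u_strict | apply: strict_bounded].
Qed.

Lemma mulQ_attained q : q != 0 -> eps_strict q ->
  shifted d (nu ((q * Q)^`N(d))) = oscale d (nu (q * Q)).
Proof.
move=> q_neq0 q_strict; have qQ_neq0 : q * Q != 0 by rewrite mulf_neq0.
rewrite nderivnM big_ord_recl nderivn0 subn0.
have lead : shifted d (nu (q * Q^`N(d))) = oscale d (nu (q * Q)).
  rewrite -[X in shifted X _]add0n shifted_mul ?derivQ_neq0 //.
  by rewrite shifted0 -Q_attained (nuM nu_val) oscale_add.
set rest := \sum_(i < d) _.
have rest_gt : olt le (oscale d (nu (q * Q))) (shifted d (nu rest)).
  apply: (nu_sum_up nu_val (P := fun y => olt le (oscale d (nu (q * Q))) (shifted d y))).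
  - exact: up_closed_shifted_lt.
  - by rewrite (nuNZ nu_val qQ_neq0).
  move=> i _; rewrite -[X in shifted X _](subnKC (ltn_ord i)).
  by apply: leibniz_term_lt => //; [apply: q_strict | apply: Q_bounded].
rewrite -lead in rest_gt.
by rewrite (nu_strict le_oag nu_val (shifted_lt rest_gt)) lead.
Qed.

Lemma size_divp_reduced u v : (size u < size Q)%N -> (size v < size Q)%N ->
  (size (u * v %/ Q)%R < size Q)%N.
Proof.
move=> small_u small_v; rewrite size_divp //.
move: (size_polyMleq u v) small_u small_v.
by move: (size (u * v)) (size u) (size v) (size Q) => a b c e; lia.
Qed.

Lemma nu_mul_reduced u v : (size u < size Q)%N -> (size v < size Q)%N ->
  ole le (nu (u * v)) (nu (u * v %% Q)) /\ ole le (nu (u * v)) (nu (u * v %/ Q * Q)).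
Proof.
move=> small_u small_v.
have [->|u_neq0] := eqVneq u 0; first by rewrite mul0r mod0p div0p mul0r oleR.
have [->|v_neq0] := eqVneq v 0; first by rewrite mulr0 mod0p div0p mul0r oleR.
have uv_eq := divp_eq (u * v) Q.
set q := u * v %/ Q in uv_eq *; set r := u * v %% Q in uv_eq *.
have [q0|q_neq0] := eqVneq q 0.
  rewrite q0 mul0r (nu0 nu_val) ole_None.
  by move: uv_eq; rewrite q0 mul0r add0r => <-; rewrite oleR.
have [r0|r_neq0] := eqVneq r 0.
  rewrite r0 (nu0 nu_val) ole_None.
  by move: uv_eq; rewrite r0 addr0 => <-; rewrite oleR.
have uv_strict : eps_strict (u * v) by apply: strict_mul => //; apply: strict_small.
have r_strict : eps_strict r by apply: strict_small; rewrite ?ltn_modp.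
have q_strict : eps_strict q.
  by apply: strict_small; rewrite ?size_divp_reduced.
have qQ_eq : q * Q = u * v - r by rewrite uv_eq addrK.
(* d_d(q Q) = d_d(u v) - d_d(r) attains the bound for q Q, whereas u v and r are
   strict, so nu(q Q) exceeds nu(u v) or nu(r) *)
have : olt le (oscale d (nu (u * v))) (oscale d (nu (q * Q))) \/
       olt le (oscale d (nu r)) (oscale d (nu (q * Q))).
  rewrite -(mulQ_attained q_neq0 q_strict) qQ_eq nderivnB.
  apply: (nuB_up le_oag nu_val (P := fun z => olt le (oscale d (nu (u * v))) (shifted d z)
                                          \/ olt le (oscale d (nu r)) (shifted d z))).
  - by move=> x y x_le [lt|lt]; [left | right]; apply: (up_closed_shifted_lt x_le lt).
  - by left; apply: uv_strict.
  - by right; apply: r_strict.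
rewrite !oscale_lt2 // => -[uv_lt | r_lt].
- split; last exact: oltW.
  have -> : r = u * v - q * Q by rewrite qQ_eq opprB addrC subrK.
  apply: (nuB_up le_oag nu_val (P := ole le (nu (u * v)))).
  + exact: up_closed_ole.
  + exact: oleR.
  + exact: oltW.
- have -> : nu (u * v) = nu r by rewrite uv_eq addrC (nu_strict le_oag nu_val r_lt).
  by split; [apply: oleR | apply: oltW].
Qed.

Lemma nu_same_deg q : q \is monic -> size q = size Q -> eps_bounded q ->
  ole le (nu q) (nu (q - Q)) /\ ole le (nu q) (nu Q).
Proof.
move=> q_monic eq_size q_bounded; set h := q - Q.
have [h0|h_neq0] := eqVneq h 0.
  have q_eq : q = Q by apply/eqP; rewrite -subr_eq0 -/h h0.
  by rewrite h0 (nu0 nu_val) ole_None q_eq oleR.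
have h_strict : eps_strict h.
  apply: strict_small => //; rewrite -eq_size size_monicB //.
  by case: Q_key.
have [h_lt|Q_le_h] := boolP (olt le (nu h) (nu Q)).
  have -> : nu q = nu h by rewrite -(nu_strict le_oag nu_val h_lt) /h subrK.
  by split; [apply: oleR | apply: oltW].
suff q_le_Q : ole le (nu q) (nu Q) by split => //; apply: oleT q_le_Q (negbNE Q_le_h).
(* d_d(Q) = d_d(q) - d_d(h) attains the bound for Q while h is strict *)
have : ole le (oscale d (nu q)) (oscale d (nu Q)) \/
       olt le (oscale d (nu h)) (oscale d (nu Q)).
  rewrite Q_attained (_ : Q = q - h); last by rewrite /h opprB addrC subrK.
  rewrite nderivnB.
  apply: (nuB_up le_oag nu_val (P := fun z => ole le (oscale d (nu q)) (shifted d z)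
                                          \/ olt le (oscale d (nu h)) (shifted d z))).
  - move=> x y x_le [le_x|lt_x]; first by left; apply: oleT le_x (shifted_le _ x_le).
    by right; apply: (up_closed_shifted_lt x_le lt_x).
  - by left; apply: q_bounded.
  - by right; apply: h_strict.
by rewrite oscale_le2 // oscale_lt2 // (negbTE Q_le_h) => -[].
Qed.

Local Notation expansion := (expanded_above le nu Q).

Lemma expanded_mul_reduced u v n : (size u < size Q)%N -> (size v < size Q)%N ->
  expansion (nu (u * v * Q ^+ n)) (u * v * Q ^+ n).
Proof.
move=> small_u small_v; have [rem_ge quo_ge] := nu_mul_reduced small_u small_v.
rewrite [X in expansion _ X](_ : _ = (u * v %% Q) * Q ^+ n + (u * v %/ Q) * Q ^+ n.+1);
  last by rewrite {1}(divp_eq (u * v) Q) mulrDl addrC exprS mulrA.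
apply: (expandedD le_oag nu_val); apply: (expanded_single nu_val Q_nc).
- by rewrite ltn_modp.
- rewrite [nu (u * v * _)](nuM nu_val) [nu (_ %% Q * _)](nuM nu_val).
  exact: (oadd_le le_oag rem_ge (oleR le_oag _)).
- exact: size_divp_reduced.
- rewrite exprS mulrA [nu (u * v * _)](nuM nu_val) [nu (_ * Q * _)](nuM nu_val).
  exact: (oadd_le le_oag quo_ge (oleR le_oag _)).
Qed.

Lemma expanded_mul m1 m2 f g :
  expansion m1 f -> expansion m2 g -> expansion (oadd m1 m2) (f * g).
Proof.
move=> [N1 [c1 [small1 _ -> above1]]] [N2 [c2 [small2 _ -> above2]]].
rewrite big_distrlr /=; apply: (expanded_sum le_oag nu_val Q_nc) => i _.
apply: (expanded_sum le_oag nu_val Q_nc) => j _.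
have term_eq : c1 i * Q ^+ i * (c2 j * Q ^+ j) = c1 i * c2 j * Q ^+ (i + j).
  by rewrite exprD -!mulrA; congr (_ * _); rewrite mulrCA.
rewrite term_eq; apply: (expanded_mono le_oag _ (expanded_mul_reduced _ _ _)) => //.
by rewrite -term_eq (nuM nu_val); apply: oadd_le.
Qed.

Lemma expanded_prod (s : seq {poly K}) : (forall q, q \in s -> expansion (nu q) q) ->
  expansion (nu (\prod_(q <- s) q)) (\prod_(q <- s) q).
Proof.
elim: s => [|q s IH] s_exp; first by rewrite big_nil -polyC1; apply: expanded_const.
rewrite big_cons (nuM nu_val); apply: expanded_mul; first by apply: s_exp; rewrite mem_head.
by apply: IH => p p_in; apply: s_exp; rewrite inE p_in orbT.
Qed.

Lemma expanded_key q : key_polynomial le nu q -> qle le (eps le nu q) (eps le nu Q) ->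
  expansion (nu q) q.
Proof.
move=> [q_monic q_nc q_min] q_le.
have q_neq0 := nonconstant_neq0 q_nc.
have [small_q|large_q] := ltnP (size q) (size Q).
  rewrite -[q]mulr1 -(expr0 Q); apply: (expanded_single nu_val Q_nc) small_q _.
  exact: oleR.
have eq_size : size q = size Q.
  apply/eqP; rewrite eqn_leq large_q andbT.
  by have := q_min Q Q_nc q_le; rewrite /deg -!subn1; move: Q_nc; rewrite /nonconstant; lia.
have [nu_qh nu_qQ] := nu_same_deg q_monic eq_size (bounded_of_eps q_neq0 q_le).
rewrite [X in expansion _ X](_ : q = (q - Q) * Q ^+ 0 + 1 * Q ^+ 1);
  last by rewrite expr0 expr1 mulr1 mul1r subrK.
apply: (expandedD le_oag nu_val); apply: (expanded_single nu_val Q_nc).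
- by rewrite -eq_size size_monicB //; case: Q_key.
- by rewrite expr0 mulr1.
- by rewrite size_poly1.
- by rewrite expr1 mul1r.
Qed.
End KeyPolynomial.

Section Representations.
Variables (G : zmodType) (le : rel G).
Hypothesis le_oag : ordered_abelian_group le.
Variables (K : fieldType) (nu : {poly K} -> option G).
Hypothesis nu_val : valuation le nu.
Variable QS : {poly K} -> Prop.

Definition monomial (t : K * seq {poly K}) : {poly K} := t.1%:P * \prod_(q <- t.2) q.

(* ts writes f as a sum of monomials in members of QS of degree at most n, all of
   value at least m; (GS1* ) asks for such a representation with n = deg f and
   m = nu f *)
Definition represents (n : nat) (m : option G) f (ts : seq (K * seq {poly K})) :=
  [/\ f = \sum_(t <- ts) monomial t, forall t, t \in ts -> ole le m (nu (monomial t)) &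
      forall t q, t \in ts -> q \in t.2 -> QS q /\ (deg q <= n)%N].

Definition representable n m f := exists ts, represents n m f ts.

Lemma representable0 n m : representable n m 0.
Proof. by exists [::]; split; rewrite ?big_nil. Qed.

Lemma representableD n m f g :
  representable n m f -> representable n m g -> representable n m (f + g).
Proof.
move=> [ts [-> ts_ge ts_QS]] [us [-> us_ge us_QS]]; exists (ts ++ us); split.
- by rewrite big_cat.
- by move=> t; rewrite mem_cat => /orP[]; [apply: ts_ge | apply: us_ge].
- by move=> t q; rewrite mem_cat => /orP[]; [apply: ts_QS | apply: us_QS].
Qed.

Lemma representable_const n (a : K) : representable n (nu a%:P) a%:P.
Proof.
have monomial_const : monomial (a, [::]) = a%:P by rewrite /monomial big_nil mulr1.
exists [:: (a, [::])]; split.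
- by rewrite big_seq1 monomial_const.
- by move=> t; rewrite inE => /eqP ->; rewrite monomial_const oleR.
- by move=> t q; rewrite inE => /eqP ->.
Qed.

Lemma representable_mono n n' m m' f : (n <= n')%N -> ole le m' m ->
  representable n m f -> representable n' m' f.
Proof.
move=> n_le m'_le [ts [f_def ts_ge ts_QS]]; exists ts; split => // [t t_in|t q t_in q_in].
  exact: oleT m'_le (ts_ge t t_in).
by have [QS_q deg_q] := ts_QS t q t_in q_in; split; last exact: leq_trans n_le.
Qed.

Lemma representable_mulX n m f Q i : QS Q -> (deg Q <= n)%N ->
  representable n m f -> representable n (oadd m (nu (Q ^+ i))) (f * Q ^+ i).
Proof.
move=> QS_Q deg_Q [ts [-> ts_ge ts_QS]].
have monomialX t : monomial (t.1, nseq i Q ++ t.2) = monomial t * Q ^+ i.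
  by rewrite /monomial big_cat big_nseq iter_mulr_1 mulrCA [RHS]mulrC.
exists [seq (t.1, nseq i Q ++ t.2) | t <- ts]; split.
- by rewrite big_map mulr_suml; apply: eq_bigr => t _; rewrite monomialX.
- move=> _ /mapP[t t_in ->]; rewrite monomialX (nuM nu_val).
  exact: oadd_le (ts_ge t t_in) (oleR _ _).
- move=> _ q /mapP[t t_in ->]; rewrite mem_cat => /orP[|]; last exact: ts_QS.
  by rewrite mem_nseq => /andP[_ /eqP ->].
Qed.

Lemma represents_const n m f ts : represents n m f ts ->
  (forall t, t \in ts -> t.2 = [::]) -> f = (\sum_(t <- ts) t.1)%:P.
Proof.
move=> [-> _ _] ts_nil; rewrite rmorph_sum; apply: eq_big_seq => t /ts_nil.
by rewrite /monomial => ->; rewrite big_nil mulr1.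
Qed.
End Representations.

Section Completeness.
Variables (G : zmodType) (le : rel G).
Hypothesis le_oag : ordered_abelian_group le.
Variables (K : fieldType) (nu : {poly K} -> option G).
Hypothesis nu_val : valuation le nu.
Variable QS : {poly K} -> Prop.
Hypothesis QS_key : forall Q, QS Q -> key_polynomial le nu Q.

Lemma GS1star_of_complete : complete_set le nu QS -> GS1star le nu QS.
Proof.
move=> QS_complete f; have [N] := ubnP (size f).
elim: N f => // N IH f /ltnSE size_f.
suff : representable le nu QS (deg f) (nu f) f by [].
have [/size1_polyC -> | f_nc] := leqP (size f) 1; first exact: representable_const.
have [Q [QS_Q deg_Qf nuQ_f]] := QS_complete f f_nc.
have Q_nc : nonconstant Q by case: (QS_key QS_Q).
have size_Qf : (size Q <= size f)%N.
  by rewrite !size_deg ?nonconstant_neq0 // -(ltn_predK f_nc).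
rewrite {3}(qexp_sum Q_nc (leqnn (size f))).
apply: (big_ind (representable le nu QS (deg f) (nu f))) => [||i _].
- exact: representable0.
- exact: representableD.
(* f_i Q^i: f_i is representable by induction, and nu(f_i Q^i) >= nu_Q(f) = nu(f) *)
have small_fi := qexp_size Q_nc f i.
have deg_fi : (deg (qexp_coef Q f i) <= deg f)%N.
  by rewrite /deg -!subn1 leq_sub2r // ltnW // (leq_trans small_fi).
apply: (representable_mono le_oag (leqnn _) (_ : ole le (nu f) _)).
  by rewrite -nuQ_f; apply: big_omin_le.
rewrite (nuM nu_val); apply: (representable_mulX le_oag nu_val) => //.
apply: (representable_mono le_oag deg_fi (oleR le_oag _)); apply: IH.
by apply: leq_trans size_f; apply: leq_trans small_fi size_Qf.
Qed.

Lemma eps_argmax (s : seq {poly K}) : s != [::] ->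
  exists2 Q, Q \in s & forall q, q \in s -> qle le (eps le nu q) (eps le nu Q).
Proof.
elim: s => [|p s IH] // _; have [->|s_nnil] := eqVneq s [::].
  by exists p => [|q]; rewrite ?mem_head // inE => /eqP ->; apply: qleR.
have [Q Q_in Q_max] := IH s_nnil.
have [p_le|Q_le] := boolP (qle le (eps le nu p) (eps le nu Q)).
  exists Q => [|q]; first by rewrite inE Q_in orbT.
  by rewrite inE => /orP[/eqP ->|/Q_max].
exists p => [|q]; first exact: mem_head.
have Q_le_p : qle le (eps le nu Q) (eps le nu p).
  by case/orP: (qleTot le_oag (eps le nu p) (eps le nu Q)) => // p_le;
    rewrite p_le in Q_le.
rewrite inE => /orP[/eqP ->|/Q_max q_le]; first exact: qleR.
exact: (qleT le_oag (eps_pos le nu Q) q_le Q_le_p).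
Qed.

Lemma complete_of_GS1star : GS1star le nu QS -> complete_set le nu QS.
Proof.
move=> QS_GS1 f f_nc.
have [ts f_rep] : representable le nu QS (deg f) (nu f) f by exact: QS_GS1.
have [f_def ts_ge ts_QS] := f_rep.
set L := flatten [seq t.2 | t <- ts].
have L_nnil : L != [::].
  apply: contraTneq f_nc => L_nil; rewrite (represents_const f_rep) /nonconstant.
    by rewrite ltnNge size_polyC_leq1.
  move=> t t_in; case E: t.2 => [//|q s].
  have : q \in L by apply/flattenP; exists t.2; [apply: map_f | rewrite E mem_head].
  by rewrite L_nil.
have [Q Q_in Q_max] := eps_argmax L_nnil.
have [t Q_t t_in] : exists2 t, Q \in t.2 & t \in ts.
  by case/flattenP: Q_in => _ /mapP[t t_in ->]; exists t.
have [QS_Q deg_Q] := ts_QS t Q t_in Q_t; have Q_key := QS_key QS_Q.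
have Q_nc : nonconstant Q by case: Q_key.
exists Q; split => //; apply: (oleA le_oag); first exact: nuQ_le.
apply: nuQ_ge; rewrite [X in expanded_above _ _ _ _ X]f_def big_seq.
apply: (expanded_sum le_oag nu_val Q_nc) => u u_in.
apply: (expanded_mono le_oag (ts_ge u u_in)).
rewrite /monomial (nuM nu_val); apply: (expanded_mul le_oag nu_val Q_key).
  exact: (expanded_const le_oag nu_val Q_nc).
apply: (expanded_prod le_oag nu_val Q_key) => q q_in.
apply: (expanded_key le_oag nu_val Q_key (QS_key (ts_QS u q u_in q_in).1)).
by apply: Q_max; apply/flattenP; exists u.2 => //; apply: map_f.
Qed.
End Completeness.

Unset Implicit Arguments.

Theorem theorem1p2 (G : zmodType) (le : rel G) (K : fieldType)
  (nu : {poly K} -> option G) (QS : {poly K} -> Prop) :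
  ordered_abelian_group le ->
  valuation le nu ->
  (forall Q, QS Q -> key_polynomial le nu Q) ->
  complete_set le nu QS <-> GS1star le nu QS.
Proof.
move=> le_oag nu_val QS_key.
by split; [apply: GS1star_of_complete | apply: complete_of_GS1star].
Qed.
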